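(* Let $A$ be a differential $K$-algebra without exponents nor logarithm, and assume that the derivation $\partial:E_A\to E_A$ is surjective. If $0\to M\to Q\to N\to0$ is an exact sequence of differential modules over $A$ with $M$ and $N$ regular singular, then $Q$ is regular singular. This applies in particular to $A=K[t,t^{-1}]$ with $\partial=t\frac{d}{dt}$.
   Context: $K$ is an algebraically closed field of characteristic $0$. $K[t^K]$ is the group algebra over $K$ of $(K,+)$, with $K$-basis $t^a$ ($a\in K$), $t^at^b=t^{a+b}$; $K[t,t^{-1}]$ is identified with the span of $t^n$, $n\in\mathbb{Z}$. Fix a set $\widetilde{K/\mathbb{Z}}\subset K$ of representatives of $K/\mathbb{Z}$ with $0\in\widetilde{K/\mathbb{Z}}$. $A$ is a commutative ring with unit containing $K[t,t^{-1}]$ as a subring, with a derivation $\partial$ extending $t\frac{d}{dt}$. $A[t^K]:=A\otimes_{K[t,t^{-1}]}K[t^K]$, $E_A:=A[t^K][\ell]$ ($\ell$ an indeterminate), with derivation $\partial$ extending that of $A$, $\partial(t^a)=at^a$, $\partial(\ell)=1$. $A$ is a differential $K$-algebra without exponents nor logarithm if $\{f\in A:\partial^2 f=0\}=K$ and, for every $a\in\widetilde{K/\mathbb{Z}}\setminus\{0\}$, $\partial f+af=0$ ($f\in A$) implies $f=0$. A differential module over a differential ring $(B,\partial)$ is a $B$-module $M$ with additive $\nabla$ satisfying $\nabla(fm)=\partial(f)m+f\nabla(m)$; morphisms are $B$-linear maps commuting with the connections; exactness is exactness of underlying modules; it is trivial if isomorphic to a direct sum of copies of $(B,\partial)$. For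 a differential module $M$ over $A$, $M\otimes_AE_A$ has connection $\nabla\otimes1+1\otimes\partial$. $M$ is regular singular if $M$ is finite free as an $A$-module and $M\otimes_AE_A$ is trivial as a differential module over $E_A$. *)

From HB Require Import structures.
From mathcomp Require Import all_boot all_order all_algebra.
Set Implicit Arguments. Unset Strict Implicit. Unset Printing Implicit Defensive.
Import Order.TTheory GRing.Theory Num.Theory.
Local Open Scope ring_scope.

Section Defs.
Variables (K : fieldType) (A : comAlgType K).

(* t is a unit of A and K[t] -> A is injective, i.e. K[t,t^-1] is a subring *)
Definition laurent_subring (t : A) :=
  (exists u : A, t * u = 1) /\
  forall p : {poly K}, (map_poly (fun k : K => k%:A) p).[t] = 0 -> p = 0.

Definition is_derivation (d : A -> A) :=
  (forall x y, d (x + y) = d x + d y) /\ (forall x y, d (x * y) = d x * y + x * d y).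

(* A contains K[t,t^-1], d is a derivation extending t d/dt *)
Definition diff_setup (t : A) (d : A -> A) :=
  [/\ laurent_subring t, is_derivation d, d t = t & forall k : K, d k%:A = 0].

(* A is exactly K[t,t^-1] *)
Definition is_laurent (t : A) :=
  forall a : A, exists (p : {poly K}) (m : nat),
    a * t ^+ m = (map_poly (fun k : K => k%:A) p).[t].

Definition reps_KmodZ (S : K -> Prop) :=
  [/\ S 0,
      forall k, exists s, S s /\ exists n : int, k = s + n%:~R
    & forall s s' (n : int), S s -> S s' -> s = s' + n%:~R -> s = s'].

Definition no_exp_log (S : K -> Prop) (d : A -> A) :=
  (forall f : A, d (d f) = 0 <-> exists k : K, f = k%:A) /\
  (forall (a : K) (f : A), S a -> a != 0 -> d f + a *: f = 0 -> f = 0).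

(* E_A = (A (x)_{K[t,t^-1]} K[t^K])[l] is presented as the quotient of
   A[K][l] (A[K] = group algebra of (K,+) over A, basis e_k = t^k) by the
   ideal generated by t.e_0 - e_1.  An element of A[K][l] is represented by a
   formal sum: a list of pairs (k, p) standing for sum p * e_k, p in A[l]. *)
Definition EA := seq (K * {poly A}).

(* coefficient of e_k: determines the element of A[K][l] *)
Definition Ecoef (x : EA) (k : K) : {poly A} := \sum_(p <- x | p.1 == k) p.2.
Definition Eadd (x y : EA) : EA := x ++ y.
Definition Eopp (x : EA) : EA := [seq (p.1, - p.2) | p <- x].
Definition Emul (x y : EA) : EA := [seq (p.1 + q.1, p.2 * q.2) | p <- x, q <- y].
Definition Eof (a : A) : EA := [:: (0, a%:P)].
Definition Esum n (f : 'I_n -> EA) : EA := flatten [seq f i | i <- enum 'I_n].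
(* generator of the ideal : t (x) 1 - 1 (x) t^1 *)
Definition Erel (t : A) : EA := [:: (0, t%:P); (1, -1)].
Definition Eeq (t : A) (x y : EA) :=
  exists c : EA, forall k, Ecoef (Eadd x (Eopp y)) k = Ecoef (Emul c (Erel t)) k.
(* derivation of E_A: d(a t^k l^j) = (d a) t^k l^j + k a t^k l^j + j a t^k l^(j-1) *)
Definition Eder (d : A -> A) (x : EA) : EA :=
  [seq (p.1, map_poly d p.2 + p.2^`() + (p.1%:A)%:P * p.2) | p <- x].

Definition EA_der_surj (t : A) (d : A -> A) :=
  forall x : EA, exists y : EA, Eeq t (Eder d y) x.

(* E_A^r with connection y |-> dy + G y (i.e. M (x) E_A in the basis e (x) 1)
   is trivial: isomorphic to E_A^s via an invertible r x s matrix Y whose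
   columns are horizontal *)
Definition EA_trivial (t : A) (d : A -> A) (r : nat) (G : 'I_r -> 'I_r -> A) :=
  exists (s : nat) (Y : 'I_r -> 'I_s -> EA) (Z : 'I_s -> 'I_r -> EA),
    [/\ forall i j, Eeq t (Esum (fun k => Emul (Y i k) (Z k j))) (Eof (i == j)%:R),
        forall i j, Eeq t (Esum (fun k => Emul (Z i k) (Y k j))) (Eof (i == j)%:R)
      & forall i j, Eeq t (Eadd (Eder d (Y i j))
                                (Esum (fun k => Emul (Eof (G i k)) (Y k j)))) [::]].

Definition is_connection (d : A -> A) (M : lmodType A) (n : M -> M) :=
  (forall x y, n (x + y) = n x + n y) /\
  (forall (a : A) x, n (a *: x) = d a *: x + a *: n x).

Definition dmorphism (M N : lmodType A) (nM : M -> M) (nN : N -> N) (f : M -> N) :=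
  (forall (a : A) x y, f (a *: x + y) = a *: f x + f y) /\
  (forall x, f (nM x) = nN (f x)).

Definition regular_singular (t : A) (d : A -> A) (M : lmodType A) (n : M -> M) :=
  exists (r : nat) (e : 'I_r -> M),
    [/\ forall m, exists c : 'I_r -> A, m = \sum_i c i *: e i,
        forall c : 'I_r -> A, \sum_i c i *: e i = 0 -> forall i, c i = 0
      & exists G : 'I_r -> 'I_r -> A,
          (forall j, n (e j) = \sum_i G i j *: e i) /\ EA_trivial t d G].

Definition rs_ext_closed (t : A) (d : A -> A) :=
  forall (M Q N : lmodType A) (nM : M -> M) (nQ : Q -> Q) (nN : N -> N)
         (f : M -> Q) (g : Q -> N),
    is_connection d nM -> is_connection d nQ -> is_connection d nN ->
    dmorphism nM nQ f -> dmorphism nQ nN g ->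
    injective f -> (forall y, exists x, g x = y) ->
    (forall q, g q = 0 <-> exists m, q = f m) ->
    regular_singular t d nM -> regular_singular t d nN -> regular_singular t d nQ.

End Defs.

From HB Require Import structures.
From mathcomp Require Import all_boot all_order all_algebra.
From mathcomp Require Import generic_quotient ring.
From Stdlib Require ClassicalEpsilon.
Set Implicit Arguments. Unset Strict Implicit. Unset Printing Implicit Defensive.
Import GRing.Theory.
Local Open Scope ring_scope.

(* Over E_A the connection matrices G_M and G_N admit invertible fundamental
   matrices Y_M and Y_N.  A basis of Q made of the image of a basis of M and of
   lifts of a basis of N has a block upper triangular connection matrix
   [[G_M, B], [0, G_N]], and [[Y_M, Y_M W], [0, Y_N]] is a fundamental matrix
   for it as soon as dW = - Y_M^-1 B Y_N, which can be solved because d is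
   surjective on E_A.  For A = K[t,t^-1] surjectivity holds in characteristic
   0: t^k l^j = d(t^k l^j / k) - (j / k) t^k l^(j-1) when k <> 0, and
   l^j = d(l^(j+1) / (j+1)). *)

Section TriangularConnection.
Variables (R : comPzRingType) (D : R -> R).
Hypotheses (DD : {morph D : a b / a + b})
  (DM : forall a b, D (a * b) = D a * b + a * D b).

Lemma derivation0 : D 0 = 0.
Proof. by apply: (addrI (D 0)); rewrite -DD !addr0. Qed.

HB.instance Definition _ := GRing.isNmodMorphism.Build R R D (derivation0, DD).

Lemma map_mx_derivationM m n p (P : 'M[R]_(m, n)) (Q : 'M[R]_(n, p)) :
  map_mx D (P *m Q) = map_mx D P *m Q + P *m map_mx D Q.
Proof.
apply/matrixP => i j; rewrite !mxE raddf_sum -big_split; apply: eq_bigr => k _.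
by rewrite !mxE; apply: DM.
Qed.

Definition trivial_connection r (G : 'M[R]_r) :=
  exists s (Y : 'M[R]_(r, s)) (Z : 'M[R]_(s, r)),
    [/\ Y *m Z = 1%:M, Z *m Y = 1%:M & map_mx D Y + G *m Y = 0].

Hypothesis D_surj : forall y, exists x, D x = y.

Lemma map_mx_derivation_surj m n (P : 'M[R]_(m, n)) : exists W, map_mx D W = P.
Proof.
have /fin_all_exists[w Dw] : forall ij : 'I_m * 'I_n, exists x, D x = P ij.1 ij.2.
  by move=> ij; apply: D_surj.
by exists (\matrix_(i, j) w (i, j)); apply/matrixP => i j; rewrite !mxE Dw.
Qed.

Lemma trivial_connection_block rM rN (GM : 'M[R]_rM) (GN : 'M[R]_rN)
    (B : 'M[R]_(rM, rN)) :
  trivial_connection GM -> trivial_connection GN ->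
  trivial_connection (block_mx GM B 0 GN).
Proof.
move=> [sM [YM [ZM [YZM ZYM horM]]]] [sN [YN [ZN [YZN ZYN horN]]]].
have [W DW] := map_mx_derivation_surj (- (ZM *m B *m YN)).
set X := YM *m W.
have horX : map_mx D X + (GM *m X + B *m YN) = 0.
  have DYM : map_mx D YM = - (GM *m YM) by apply/eqP; rewrite -addr_eq0 horM.
  by rewrite /X map_mx_derivationM DW DYM mulNmx mulmxN !mulmxA YZM mul1mx
    -opprD addNr.
exists (sM + sN), (block_mx YM X 0 YN), (block_mx ZM (- (ZM *m X *m ZN)) 0 ZN).
split.
- rewrite mulmx_block !mul0mx !mulmx0 !addr0 !add0r YZM YZN mulmxN !mulmxA YZM.
  by rewrite mul1mx addNr -scalar_mx_block.
- rewrite mulmx_block !mul0mx !mulmx0 !addr0 !add0r ZYM ZYN mulNmx -!mulmxA ZYN.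
  by rewrite mulmx1 addrN -scalar_mx_block.
- rewrite map_block_mx raddf0 mulmx_block !mul0mx !mulmx0 !addr0 !add0r.
  by rewrite add_block_mx horM horN horX addr0 block_mx0.
Qed.

End TriangularConnection.

Section RingEA.
Variables (K : fieldType) (A : comAlgType K).
Implicit Types x y z c : EA A.

Definition same_coef x y := forall k, Ecoef x k = Ecoef y k.

Lemma EcoefE x k : Ecoef x k = \sum_(p <- x) (if p.1 == k then p.2 else 0).
Proof. by rewrite /Ecoef big_mkcond. Qed.

Lemma Ecoef_nil k : Ecoef [::] k = 0 :> {poly A}.
Proof. by rewrite /Ecoef big_nil. Qed.

Lemma Ecoef_add x y k : Ecoef (Eadd x y) k = Ecoef x k + Ecoef y k.
Proof. by rewrite /Ecoef /Eadd big_cat. Qed.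

Lemma Ecoef_opp x k : Ecoef (Eopp x) k = - Ecoef x k.
Proof.
rewrite !EcoefE big_map -sumrN; apply: eq_bigr => p _ /=.
by case: ifP; rewrite ?oppr0.
Qed.

Lemma Ecoef_mul x y k : Ecoef (Emul x y) k =
  \sum_(p <- x) \sum_(q <- y) (if p.1 + q.1 == k then p.2 * q.2 else 0).
Proof. by rewrite EcoefE /Emul big_allpairs_dep. Qed.

Lemma Ecoef_mulr x y k : Ecoef (Emul x y) k = \sum_(p <- x) p.2 * Ecoef y (k - p.1).
Proof.
rewrite Ecoef_mul; apply: eq_bigr => p _; rewrite EcoefE mulr_sumr.
apply: eq_bigr => q _; rewrite (can2_eq (addKr p.1) (addNKr p.1)) addrC.
by case: ifP; rewrite ?mulr0.
Qed.

Lemma Ecoef_mulC x y k : Ecoef (Emul x y) k = Ecoef (Emul y x) k.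
Proof.
rewrite !Ecoef_mul exchange_big; apply: eq_bigr => q _; apply: eq_bigr => p _.
by rewrite addrC mulrC.
Qed.

Lemma Ecoef_mulA x y z k : Ecoef (Emul (Emul x y) z) k = Ecoef (Emul x (Emul y z)) k.
Proof.
rewrite !Ecoef_mul /Emul big_allpairs_dep; apply: eq_bigr => p _.
rewrite big_allpairs_dep; apply: eq_bigr => q _; apply: eq_bigr => r _ /=.
by rewrite addrA mulrA.
Qed.

Lemma Emul_addl x y z : Emul (Eadd x y) z = Eadd (Emul x z) (Emul y z).
Proof. exact: allpairs_cat. Qed.

Lemma Emul_oppl x y : Emul (Eopp x) y = Eopp (Emul x y).
Proof.
rewrite /Emul /Eopp allpairs_mapl map_allpairs; apply: eq_allpairs => p q /=.
by rewrite mulNr.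
Qed.

Lemma same_coef_mulr x y y' : same_coef y y' -> same_coef (Emul x y) (Emul x y').
Proof. by move=> yy' k; rewrite !Ecoef_mulr; apply: eq_bigr => p _; rewrite yy'. Qed.

Lemma same_coef_mull x x' y : same_coef x x' -> same_coef (Emul x y) (Emul x' y).
Proof. by move=> xx' k; rewrite Ecoef_mulC (same_coef_mulr y xx') Ecoef_mulC. Qed.

Variable t : A.

Lemma same_coef_Eeq x y : same_coef x y -> Eeq t x y.
Proof.
move=> xy; exists [::] => k; rewrite Ecoef_add Ecoef_opp xy subrr.
by rewrite /Emul /= Ecoef_nil.
Qed.

Lemma Eeq_refl x : Eeq t x x. Proof. exact: same_coef_Eeq. Qed.

Lemma Eeq_sym x y : Eeq t x y -> Eeq t y x.
Proof.
move=> [c xy]; exists (Eopp c) => k; rewrite Emul_oppl Ecoef_opp -xy.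
by rewrite !Ecoef_add !Ecoef_opp opprD opprK addrC.
Qed.

Lemma Eeq_trans x y z : Eeq t x y -> Eeq t y z -> Eeq t x z.
Proof.
move=> [c1 xy] [c2 yz]; exists (Eadd c1 c2) => k.
by rewrite Emul_addl !Ecoef_add -xy -yz !Ecoef_add !Ecoef_opp addrA subrK.
Qed.

Lemma Eeq_add x x' y y' : Eeq t x x' -> Eeq t y y' -> Eeq t (Eadd x y) (Eadd x' y').
Proof.
move=> [c1 xx'] [c2 yy']; exists (Eadd c1 c2) => k.
rewrite Emul_addl !Ecoef_add -xx' -yy'.
by rewrite !Ecoef_add !Ecoef_opp !Ecoef_add opprD addrACA.
Qed.

Lemma Eeq_opp x x' : Eeq t x x' -> Eeq t (Eopp x) (Eopp x').
Proof.
move=> [c xx']; exists (Eopp c) => k; rewrite Emul_oppl Ecoef_opp -xx'.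
by rewrite !Ecoef_add !Ecoef_opp opprD.
Qed.

Lemma Eeq_mull x x' y : Eeq t x x' -> Eeq t (Emul x y) (Emul x' y).
Proof.
move=> [c xx']; exists (Emul c y) => k.
rewrite -Emul_oppl -Emul_addl (same_coef_mull y xx').
by rewrite !Ecoef_mulA; apply: same_coef_mulr => k'; rewrite Ecoef_mulC.
Qed.

Lemma Eeq_mul x x' y y' : Eeq t x x' -> Eeq t y y' -> Eeq t (Emul x y) (Emul x' y').
Proof.
have EmulC u v : Eeq t (Emul u v) (Emul v u).
  by apply: same_coef_Eeq => k; rewrite Ecoef_mulC.
move=> xx' yy'; apply: Eeq_trans (Eeq_mull y xx') _.
apply: Eeq_trans (EmulC _ _) _; apply: Eeq_trans (Eeq_mull x' yy') _; exact: EmulC.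
Qed.

Definition Eeqb x y : bool := ClassicalEpsilon.excluded_middle_informative (Eeq t x y).

Lemma EeqbP x y : reflect (Eeq t x y) (Eeqb x y).
Proof.
by rewrite /Eeqb; case: ClassicalEpsilon.excluded_middle_informative; constructor.
Qed.

Lemma Eeqb_refl : reflexive Eeqb. Proof. by move=> x; apply/EeqbP/Eeq_refl. Qed.
Lemma Eeqb_sym : symmetric Eeqb.
Proof. by move=> x y; apply/EeqbP/EeqbP => /Eeq_sym. Qed.
Lemma Eeqb_trans : transitive Eeqb.
Proof. by move=> y x z /EeqbP xy /EeqbP yz; apply/EeqbP/(Eeq_trans xy yz). Qed.

Canonical Eeqb_equiv := EquivRel Eeqb Eeqb_refl Eeqb_sym Eeqb_trans.

Definition EAquot := {eq_quot Eeqb}%qT.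
HB.instance Definition _ := Choice.on EAquot.
HB.instance Definition _ := EqQuotient.on EAquot.

Definition piE : EA A -> EAquot := \pi%qT.

Lemma piEP x y : piE x = piE y <-> Eeq t x y.
Proof. by split=> [/eqquotP/EeqbP | xy]; last apply/eqquotP/EeqbP. Qed.

Lemma piEK (X : EAquot) : piE (repr X) = X. Proof. exact: reprK. Qed.

Lemma repr_piE x : Eeq t (repr (piE x)) x. Proof. by apply/piEP; rewrite piEK. Qed.

Definition zeroE : EAquot := piE [::].
Definition oppE (X : EAquot) : EAquot := piE (Eopp (repr X)).
Definition addE (X Y : EAquot) : EAquot := piE (Eadd (repr X) (repr Y)).

Lemma piE_add x y : piE (Eadd x y) = addE (piE x) (piE y).
Proof. by apply/piEP/Eeq_add; apply/Eeq_sym/repr_piE. Qed.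

Lemma piE_opp x : piE (Eopp x) = oppE (piE x).
Proof. by apply/piEP/Eeq_opp; apply/Eeq_sym/repr_piE. Qed.

Lemma addEA : associative addE.
Proof.
move=> X Y Z; rewrite -[X]piEK -[Y]piEK -[Z]piEK -!piE_add; congr piE; exact: catA.
Qed.

Lemma addEC : commutative addE.
Proof.
move=> X Y; rewrite -[X]piEK -[Y]piEK -!piE_add; apply/piEP/same_coef_Eeq => k.
by rewrite !Ecoef_add addrC.
Qed.

Lemma add0E : left_id zeroE addE.
Proof. by move=> X; rewrite -[X]piEK -piE_add. Qed.

Lemma addNE : left_inverse zeroE oppE addE.
Proof.
move=> X; rewrite -[X]piEK -piE_opp -piE_add; apply/piEP/same_coef_Eeq => k.
by rewrite Ecoef_add Ecoef_opp addNr Ecoef_nil.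
Qed.

HB.instance Definition _ := GRing.isZmodule.Build EAquot addEA addEC add0E addNE.

Definition oneE : EAquot := piE (Eof 1).
Definition mulE (X Y : EAquot) : EAquot := piE (Emul (repr X) (repr Y)).

Lemma piE_mul x y : piE (Emul x y) = mulE (piE x) (piE y).
Proof. by apply/piEP/Eeq_mul; apply/Eeq_sym/repr_piE. Qed.

Lemma mulEA : associative mulE.
Proof.
move=> X Y Z; rewrite -[X]piEK -[Y]piEK -[Z]piEK -!piE_mul.
by apply/piEP/same_coef_Eeq => k; rewrite Ecoef_mulA.
Qed.

Lemma mulEC : commutative mulE.
Proof.
move=> X Y; rewrite -[X]piEK -[Y]piEK -!piE_mul.
by apply/piEP/same_coef_Eeq => k; apply: Ecoef_mulC.
Qed.

Lemma mul1E : left_id oneE mulE.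
Proof.
move=> X; rewrite -[X]piEK /oneE -piE_mul; apply/piEP/same_coef_Eeq => k.
by rewrite Ecoef_mulr big_cons big_nil /= subr0 mul1r addr0.
Qed.

Lemma mulEDl : left_distributive mulE addE.
Proof.
move=> X Y Z; rewrite -[X]piEK -[Y]piEK -[Z]piEK -[addE _ _]piE_add -!piE_mul.
by rewrite -piE_add Emul_addl.
Qed.

HB.instance Definition _ :=
  GRing.Zmodule_isComPzRing.Build EAquot mulEA mulEC mul1E mulEDl.

Lemma piED x y : piE (Eadd x y) = piE x + piE y. Proof. exact: piE_add. Qed.
Lemma piEM x y : piE (Emul x y) = piE x * piE y. Proof. exact: piE_mul. Qed.
Lemma piE0 : piE [::] = 0. Proof. by []. Qed.

Lemma piE_Esum n (F : 'I_n -> EA A) : piE (Esum F) = \sum_i piE (F i).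
Proof.
rewrite /Esum -big_enum /=.
by elim: (enum 'I_n) => [|i s IH] /=; rewrite ?big_nil // big_cons piED IH.
Qed.

Lemma piE_cons k P x : piE ((k, P) :: x) = piE [:: (k, P)] + piE x.
Proof. by rewrite -piED. Qed.

Definition constE (a : A) : EAquot := piE (Eof a).

Lemma constED a b : constE (a + b) = constE a + constE b.
Proof.
rewrite /constE -piED; apply/piEP/same_coef_Eeq => k.
by rewrite Ecoef_add !EcoefE !big_cons !big_nil /=; case: eqP; rewrite ?polyCD ?addr0.
Qed.

Lemma constE0 : constE 0 = 0.
Proof.
rewrite /constE -piE0; apply/piEP/same_coef_Eeq => k.
by rewrite !EcoefE !big_cons !big_nil /=; case: eqP; rewrite ?addr0.
Qed.

Lemma constEM a b : constE (a * b) = constE a * constE b.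
Proof. by rewrite /constE -piEM /Emul /= addr0 -polyCM. Qed.

HB.instance Definition _ :=
  GRing.isNmodMorphism.Build A EAquot constE (constE0, constED).
HB.instance Definition _ :=
  GRing.isMonoidMorphism.Build A EAquot constE (erefl, constEM).

End RingEA.

Section ExactSequence.
Variable R : pzRingType.

Definition is_basis (V : lmodType R) r (e : 'I_r -> V) :=
  (forall v, exists c : 'I_r -> R, v = \sum_i c i *: e i) /\
  (forall c : 'I_r -> R, \sum_i c i *: e i = 0 -> forall i, c i = 0).

Definition connection_matrix (V : lmodType R) (n : V -> V) r (e : 'I_r -> V)
    (G : 'M[R]_r) :=
  forall j, n (e j) = \sum_i G i j *: e i.

Definition join_family (T : Type) m n (a : 'I_m -> T) (b : 'I_n -> T)
    (k : 'I_(m + n)) : T :=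
  match split k with inl i => a i | inr j => b j end.

Lemma join_family_lshift T m n (a : 'I_m -> T) (b : 'I_n -> T) i :
  join_family a b (lshift n i) = a i.
Proof. by rewrite /join_family (unsplitK (inl i)). Qed.

Lemma join_family_rshift T m n (a : 'I_m -> T) (b : 'I_n -> T) j :
  join_family a b (rshift m j) = b j.
Proof. by rewrite /join_family (unsplitK (inr j)). Qed.

Variables (M Q N : lmodType R) (nM : M -> M) (nQ : Q -> Q) (nN : N -> N).
Variables (f : M -> Q) (g : Q -> N).
Hypotheses (fL : forall (a : R) x y, f (a *: x + y) = a *: f x + f y)
  (gL : forall (a : R) x y, g (a *: x + y) = a *: g x + g y).

HB.instance Definition _ := GRing.isLinear.Build R M Q *:%R f fL.
HB.instance Definition _ := GRing.isLinear.Build R Q N *:%R g gL.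

Hypotheses (f_inj : injective f) (g_surj : forall y, exists x, g x = y)
  (exact_fg : forall q, g q = 0 <-> exists m, q = f m)
  (fC : forall x, f (nM x) = nQ (f x)) (gC : forall x, g (nQ x) = nN (g x)).

Lemma gf_eq0 m : g (f m) = 0.
Proof. by apply/exact_fg; exists m. Qed.

Section Lifts.
Variables (rM rN : nat) (eM : 'I_rM -> M) (eN : 'I_rN -> N) (q : 'I_rN -> Q).
Hypotheses (basisM : is_basis eM) (basisN : is_basis eN)
  (gq : forall j, g (q j) = eN j).

Lemma is_basis_join : is_basis (join_family (f \o eM) q).
Proof.
have [spanM freeM] := basisM; have [spanN freeN] := basisN.
split=> [x | c].
  have [cN xN] := spanN (g x).
  have [m xm] : exists m, x - \sum_j cN j *: q j = f m.
    apply/exact_fg; rewrite linearB linear_sum /= xN.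
    by under [X in _ - X]eq_bigr do rewrite linearZ /= gq; rewrite subrr.
  have [cM mM] := spanM m.
  exists (join_family cM cN); rewrite big_split_ord /=.
  under eq_bigr do rewrite !join_family_lshift.
  under [X in _ + X]eq_bigr do rewrite !join_family_rshift.
  rewrite -(subrK (\sum_j cN j *: q j) x) xm mM linear_sum.
  by congr (_ + _); apply: eq_bigr => i _; rewrite linearZ.
rewrite big_split_ord /=.
under eq_bigr do rewrite join_family_lshift.
under [X in _ + X]eq_bigr do rewrite join_family_rshift.
move=> c0.
have cN0 j : c (rshift rM j) = 0.
  suff sN : \sum_j c (rshift rM j) *: eN j = 0 by apply: freeN sN j.
  move/(congr1 g): c0; rewrite linear0 linearD !linear_sum big1 ?add0r => [|i _].
    by under eq_bigr do rewrite linearZ /= gq.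
  by rewrite linearZ /= gf_eq0 scaler0.
have cM0 i : c (lshift rN i) = 0.
  suff sM : \sum_i c (lshift rN i) *: eM i = 0 by apply: freeM sM i.
  apply: f_inj; rewrite linear0 -[RHS]c0 [X in _ = _ + X]big1 ?addr0 => [|j _].
    by rewrite linear_sum; apply: eq_bigr => k _; rewrite linearZ.
  by rewrite cN0 scale0r.
by move=> k; case: (split_ordP k) => [i ->|j ->].
Qed.

Lemma connection_lift (GN : 'M[R]_rN) : connection_matrix nN eN GN ->
  exists B : 'M[R]_(rM, rN), forall j,
    nQ (q j) = \sum_i B i j *: f (eM i) + \sum_i GN i j *: q i.
Proof.
move=> connN; have [spanM _] := basisM.
have liftB j : exists b : 'I_rM -> R,
    nQ (q j) = \sum_i b i *: f (eM i) + \sum_i GN i j *: q i.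
  have [m qm] : exists m, nQ (q j) - \sum_i GN i j *: q i = f m.
    apply/exact_fg; rewrite linearB linear_sum /= gC gq connN.
    by under [X in _ - X]eq_bigr do rewrite linearZ /= gq; rewrite subrr.
  have [b mb] := spanM m; exists b.
  suff -> : \sum_i b i *: f (eM i) = f m by rewrite -qm subrK.
  by rewrite mb linear_sum; apply: eq_bigr => i _; rewrite linearZ.
have [b qb] := fin_all_exists liftB.
by exists (\matrix_(i, j) b j i) => j; under eq_bigr do rewrite mxE.
Qed.

Lemma connection_matrix_join (GM : 'M[R]_rM) (GN : 'M[R]_rN) (B : 'M[R]_(rM, rN)) :
  connection_matrix nM eM GM ->
  (forall j, nQ (q j) = \sum_i B i j *: f (eM i) + \sum_i GN i j *: q i) ->
  connection_matrix nQ (join_family (f \o eM) q) (block_mx GM B 0 GN).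
Proof.
move=> connM nQq k; rewrite big_split_ord /=.
under eq_bigr do rewrite join_family_lshift.
under [X in _ + X]eq_bigr do rewrite join_family_rshift.
case: (split_ordP k) => [j ->|j ->]; rewrite ?join_family_lshift ?join_family_rshift.
- under eq_bigr do rewrite block_mxEul.
  under [X in _ + X]eq_bigr do rewrite block_mxEdl mxE scale0r.
  rewrite big1_eq addr0 /= -fC connM linear_sum.
  by apply: eq_bigr => i _; rewrite linearZ.
- under eq_bigr do rewrite block_mxEur.
  by under [X in _ + X]eq_bigr do rewrite block_mxEdr.
Qed.

End Lifts.

Lemma extension_basis rM rN (eM : 'I_rM -> M) (eN : 'I_rN -> N) GM GN :
  is_basis eM -> connection_matrix nM eM GM ->
  is_basis eN -> connection_matrix nN eN GN ->
  exists (e : 'I_(rM + rN) -> Q) (B : 'M[R]_(rM, rN)),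
    is_basis e /\ connection_matrix nQ e (block_mx GM B 0 GN).
Proof.
move=> basisM connM basisN connN.
have [q gq] := fin_all_exists (fun j => g_surj (eN j)).
have [B nQq] := connection_lift basisM gq connN.
exists (join_family (f \o eM) q), B; split.
- exact: is_basis_join basisM basisN gq.
- exact: connection_matrix_join connM nQq.
Qed.

End ExactSequence.

Section DerivationE.
Variables (K : fieldType) (A : comAlgType K) (t : A) (d : A -> A).
Hypotheses (dD : {morph d : a b / a + b})
  (dM : forall a b, d (a * b) = d a * b + a * d b)
  (dt : d t = t) (dK : forall k : K, d k%:A = 0).

HB.instance Definition _ := GRing.isNmodMorphism.Build A A d (derivation0 dD, dD).

Lemma map_poly_derivationM (P Q : {poly A}) :
  map_poly d (P * Q) = map_poly d P * Q + P * map_poly d Q.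
Proof.
apply/polyP => i; rewrite coefD coef_map !coefM raddf_sum -big_split /=.
by apply: eq_bigr => j _; rewrite !coef_map dM.
Qed.

(* d (P(l) t^k) = (der_coef k P)(l) t^k in E_A *)
Definition der_coef (k : K) (P : {poly A}) := map_poly d P + P^`() + (k%:A)%:P * P.

Lemma der_coefD k : {morph der_coef k : P Q / P + Q}.
Proof. by move=> P Q; rewrite /der_coef !raddfD mulrDr; ring. Qed.

Lemma der_coef0 k : der_coef k 0 = 0.
Proof. by rewrite /der_coef !raddf0 mulr0 !addr0. Qed.

HB.instance Definition _ k :=
  GRing.isNmodMorphism.Build {poly A} {poly A} (der_coef k) (der_coef0 k, der_coefD k).

Lemma der_coefM a b P Q :
  der_coef (a + b) (P * Q) = der_coef a P * Q + P * der_coef b Q.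
Proof. by rewrite /der_coef map_poly_derivationM derivM scalerDl polyCD; ring. Qed.

Lemma Ecoef_Eder x k : Ecoef (Eder d x) k = der_coef k (Ecoef x k).
Proof.
rewrite !EcoefE big_map raddf_sum; apply: eq_bigr => p _ /=.
by case: eqP => [->|_] //; rewrite raddf0.
Qed.

Lemma Ecoef_EderM x y k :
  Ecoef (Eder d (Emul x y)) k = Ecoef (Eadd (Emul (Eder d x) y) (Emul x (Eder d y))) k.
Proof.
rewrite Ecoef_Eder Ecoef_add !Ecoef_mul raddf_sum /Eder big_map -big_split /=.
apply: eq_bigr => p _; rewrite raddf_sum big_map -big_split /=; apply: eq_bigr => q _.
by case: eqP => [<-|_]; rewrite ?der_coefM ?raddf0 ?addr0.
Qed.

Lemma Eder_Erel : same_coef (Eder d (Erel t)) (Erel t).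
Proof.
have dN1 : d (-1) = 0 by rewrite -(dK (-1)) scaleN1r.
move=> k; congr Ecoef; rewrite /Eder /Erel /= map_polyC /= dt derivC scale0r polyC0.
rewrite mul0r !addr0 -polyC1 -polyCN map_polyC /= dN1 derivC.
by rewrite !add0r scale1r polyC1 mul1r.
Qed.

Lemma Eeq_Eder x y : Eeq t x y -> Eeq t (Eder d x) (Eder d y).
Proof.
move=> [c xy]; exists (Eadd (Eder d c) c) => k.
have -> : Ecoef (Eadd (Eder d x) (Eopp (Eder d y))) k =
          Ecoef (Eder d (Emul c (Erel t))) k.
  by rewrite Ecoef_add Ecoef_opp !Ecoef_Eder -xy Ecoef_add Ecoef_opp raddfB.
by rewrite Ecoef_EderM Emul_addl !Ecoef_add (same_coef_mulr _ Eder_Erel).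
Qed.

Local Notation E := (EAquot t).

Definition derE (X : E) : E := piE t (Eder d (repr X)).

Lemma piE_der x : piE t (Eder d x) = derE (piE t x).
Proof. by apply/piEP/Eeq_Eder; apply/Eeq_sym/repr_piE. Qed.

Lemma derED : {morph derE : X Y / X + Y}.
Proof.
move=> X Y; rewrite -[X]piEK -[Y]piEK -piED -!piE_der -piED.
by congr piE; exact: map_cat.
Qed.

Lemma derE0 : derE 0 = 0.
Proof. by apply: (addrI (derE 0)); rewrite -derED !addr0. Qed.

HB.instance Definition _ := GRing.isNmodMorphism.Build E E derE (derE0, derED).

Lemma derEM (X Y : E) : derE (X * Y) = derE X * Y + X * derE Y.
Proof.
rewrite -[X]piEK -[Y]piEK -piEM -!piE_der -!piEM -piED.
by apply/piEP/same_coef_Eeq; apply: Ecoef_EderM.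
Qed.

Lemma constE_der a : derE (constE t a) = constE t (d a).
Proof.
rewrite /constE -piE_der; congr piE.
by rewrite /Eder /= map_polyC derivC scale0r polyC0 mul0r !addr0.
Qed.

Lemma EA_der_surjE : EA_der_surj t d <-> forall X : E, exists Y, derE Y = X.
Proof.
split=> [surj X | surj x].
  have [y yX] := surj (repr X); exists (piE t y).
  by rewrite -piE_der -[X]piEK; apply/piEP.
have [Y YX] := surj (piE t x); exists (repr Y).
by apply/piEP; rewrite piE_der piEK.
Qed.

Lemma EA_trivialE r (G : 'I_r -> 'I_r -> A) :
  EA_trivial t d G <-> trivial_connection derE (\matrix_(i, j) constE t (G i j)).
Proof.
have piE_dot n (a b : 'I_n -> EA A) :
    piE t (Esum (fun k => Emul (a k) (b k))) = \sum_k piE t (a k) * piE t (b k).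
  by rewrite piE_Esum; apply: eq_bigr => k _; rewrite piEM.
have piE_delta i j : piE t (Eof (i == j)%:R) = (i == j)%:R.
  by rewrite -[piE t _]/(constE t _) rmorph_nat.
split=> [[s [Y [Z [YZ ZY horY]]]] | [s [Y [Z [YZ ZY horY]]]]].
  exists s, (\matrix_(i, j) piE t (Y i j)), (\matrix_(i, j) piE t (Z i j)).
  split; apply/matrixP => i j; rewrite !mxE.
  - move/piEP: (YZ i j); rewrite piE_dot piE_delta => <-.
    by apply: eq_bigr => k _; rewrite !mxE.
  - move/piEP: (ZY i j); rewrite piE_dot piE_delta => <-.
    by apply: eq_bigr => k _; rewrite !mxE.
  - move/piEP: (horY i j); rewrite piED piE_der piE_dot piE0 => hor.
    by rewrite -[RHS]hor; congr (_ + _); apply: eq_bigr => k _; rewrite !mxE.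
exists s, (fun i j => repr (Y i j)), (fun i j => repr (Z i j)).
split=> i j; apply/piEP.
- rewrite piE_dot piE_delta; move/matrixP: YZ => /(_ i j); rewrite !mxE => <-.
  by apply: eq_bigr => k _; rewrite !piEK.
- rewrite piE_dot piE_delta; move/matrixP: ZY => /(_ i j); rewrite !mxE => <-.
  by apply: eq_bigr => k _; rewrite !piEK.
- rewrite piED piE_der piE_dot piE0 piEK; move/matrixP: horY => /(_ i j).
  rewrite !mxE => hor; rewrite -[RHS]hor; congr (_ + _).
  by apply: eq_bigr => k _; rewrite !mxE piEK.
Qed.

Lemma regular_singularP (V : lmodType A) (n : V -> V) :
  regular_singular t d n <-> exists r (e : 'I_r -> V) (G : 'M[A]_r),
    [/\ is_basis e, connection_matrix n e G
       & trivial_connection derE (map_mx (constE t) G)].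
Proof.
split=> [[r [e [span free [G [conn /EA_trivialE triv]]]]]
        | [r [e [G [[span free] conn triv]]]]].
  exists r, e, (\matrix_(i, j) G i j); split=> //.
    by move=> j; rewrite conn; apply: eq_bigr => i _; rewrite mxE.
  by congr trivial_connection: triv; apply/matrixP => i j; rewrite !mxE.
exists r, e; split; [exact: span | exact: free | exists G; split; first exact: conn].
apply/EA_trivialE; congr trivial_connection: triv.
by apply/matrixP => i j; rewrite !mxE.
Qed.

Lemma regular_singular_extension : EA_der_surj t d -> rs_ext_closed t d.
Proof.
move=> /EA_der_surjE surj M Q N nM nQ nN f g _ _ _ [fL fC] [gL gC].
move=> f_inj g_surj exact_fg.
move=> /regular_singularP[rM [eM [GM [basisM connM trivM]]]].
move=> /regular_singularP[rN [eN [GN [basisN connN trivN]]]].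
have [e [B [basisQ connQ]]] :=
  extension_basis fL gL f_inj g_surj exact_fg fC gC basisM connM basisN connN.
apply/regular_singularP; exists (rM + rN), e, (block_mx GM B 0 GN); split=> //.
by rewrite map_block_mx map_mx0; apply: (trivial_connection_block derED derEM surj).
Qed.

Section Laurent.
Hypotheses (char0 : [pchar K] =i pred0) (laurent : is_laurent t).

Definition scalE (c : K) : E := constE t c%:A.

Lemma scalED : {morph scalE : a b / a + b}.
Proof. by move=> a b; rewrite /scalE scalerDl raddfD. Qed.

Lemma scalE0 : scalE 0 = 0.
Proof. by rewrite /scalE scale0r raddf0. Qed.

Lemma scalE1 : scalE 1 = 1.
Proof. by rewrite /scalE scale1r rmorph1. Qed.

Lemma scalEM : {morph scalE : a b / a * b}.
Proof. by move=> a b; rewrite /scalE -rmorphM -scalerAl mul1r scalerA. Qed.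

HB.instance Definition _ := GRing.isNmodMorphism.Build K E scalE (scalE0, scalED).
HB.instance Definition _ := GRing.isMonoidMorphism.Build K E scalE (scalE1, scalEM).

Lemma derE_scalE c : derE (scalE c) = 0.
Proof. by rewrite constE_der dK raddf0. Qed.

Lemma scalEVK c X : c != 0 -> scalE c^-1 * (scalE c * X) = X.
Proof. by move=> c0; rewrite mulrA -rmorphM mulVf // rmorph1 mul1r. Qed.

Definition monomE (k : K) (P : {poly A}) : E := piE t [:: (k, P)].

Lemma monomED k : {morph monomE k : P Q / P + Q}.
Proof.
move=> P Q; rewrite -piED; apply/piEP/same_coef_Eeq => k'.
by rewrite Ecoef_add !EcoefE !big_cons !big_nil /=; case: eqP; rewrite ?addr0.
Qed.

Lemma monomE0 k : monomE k 0 = 0.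
Proof.
rewrite -piE0; apply/piEP/same_coef_Eeq => k'.
by rewrite !EcoefE !big_cons !big_nil /=; case: eqP; rewrite ?addr0.
Qed.

HB.instance Definition _ k :=
  GRing.isNmodMorphism.Build {poly A} E (monomE k) (monomE0 k, monomED k).

Lemma monomE_constM k c P : monomE k (c%:P * P) = constE t c * monomE k P.
Proof. by rewrite /constE /monomE -piEM /Emul /= add0r. Qed.

Lemma monomE_tM k P : monomE k (t%:P * P) = monomE (k + 1) P.
Proof.
apply/piEP; exists [:: (k, P)] => k'; congr Ecoef.
by rewrite /Emul /Erel /= addr0 mulrN1 mulrC.
Qed.

Lemma monomE_tnM k m P : monomE k ((t ^+ m)%:P * P) = monomE (k + m%:R) P.
Proof.
elim: m k => [|m IH] k; first by rewrite expr0 polyC1 mul1r addr0.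
by rewrite exprS polyCM -mulrA monomE_tM IH -addrA nat1r.
Qed.

Lemma derE_monomE k P : derE (monomE k P) = monomE k (der_coef k P).
Proof. by rewrite /monomE -piE_der. Qed.

Lemma derE_monomE_Xn k j :
  derE (monomE k 'X^j) = scalE k * monomE k 'X^j + monomE k 'X^(j.-1) *+ j.
Proof.
have dXn : map_poly d 'X^j = 0.
  apply/polyP => i; rewrite coef_map coefXn coef0 /=.
  by case: (i == j); rewrite ?raddf0 // -(dK 1) scale1r.
rewrite derE_monomE /der_coef dXn add0r derivXn addrC raddfD raddfMn /=.
by rewrite monomE_constM.
Qed.

Definition derE_range (X : E) := exists Y, derE Y = X.

Lemma derE_range_der Y : derE_range (derE Y).
Proof. by exists Y. Qed.

Lemma derE_range0 : derE_range 0.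
Proof. by exists 0; rewrite raddf0. Qed.

Lemma derE_rangeD X Y : derE_range X -> derE_range Y -> derE_range (X + Y).
Proof. by move=> [X' <-] [Y' <-]; exists (X' + Y'); rewrite raddfD. Qed.

Lemma derE_rangeB X Y : derE_range X -> derE_range Y -> derE_range (X - Y).
Proof. by move=> [X' <-] [Y' <-]; exists (X' - Y'); rewrite raddfB. Qed.

Lemma derE_rangeMn X n : derE_range X -> derE_range (X *+ n).
Proof. by move=> [X' <-]; exists (X' *+ n); rewrite raddfMn. Qed.

Lemma derE_range_sum n (F : 'I_n -> E) :
  (forall i, derE_range (F i)) -> derE_range (\sum_i F i).
Proof.
by move=> FR; elim/big_ind: _ => //; [exact: derE_range0 | exact: derE_rangeD].
Qed.

Lemma derE_range_scalEM c X : derE_range X -> derE_range (scalE c * X).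
Proof.
by move=> [X' <-]; exists (scalE c * X'); rewrite derEM derE_scalE mul0r add0r.
Qed.

Lemma derE_range_monomE_Xn k j : derE_range (monomE k 'X^j).
Proof.
have [-> | k0] := eqVneq k 0.
  have j1_neq0 : j.+1%:R != 0 :> K by move/pcharf0P: char0 => ->.
  exists (scalE j.+1%:R^-1 * monomE 0 'X^(j.+1)).
  rewrite derEM derE_scalE mul0r add0r derE_monomE_Xn rmorph0 mul0r add0r /=.
  by rewrite -[monomE 0 _ *+ _]mulr_natl -(rmorph_nat scalE) scalEVK.
elim: j => [|j IH].
  have -> : monomE k 'X^0 = scalE k^-1 * derE (monomE k 'X^0).
    by rewrite derE_monomE_Xn mulr0n addr0 scalEVK.
  exact/derE_range_scalEM/derE_range_der.
have -> : monomE k 'X^(j.+1) =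
    scalE k^-1 * (derE (monomE k 'X^(j.+1)) - monomE k 'X^j *+ j.+1).
  by rewrite derE_monomE_Xn addrK scalEVK.
exact/derE_range_scalEM/derE_rangeB/derE_rangeMn/IH/derE_range_der.
Qed.

Lemma derE_range_monomE k P : derE_range (monomE k P).
Proof.
rewrite -[P]coefK poly_def raddf_sum; apply: derE_range_sum => i /=.
(* t^m P_i is a polynomial in t, and each factor t shifts the exponent k *)
have [p [m ptm]] := laurent P`_i.
rewrite -mul_polyC.
rewrite -[k](subrK m%:R) -monomE_tnM mulrA -polyCM [t ^+ m * _]mulrC ptm horner_coef.
rewrite (big_morph _ (@polyCD _) (@polyC0 _)) mulr_suml raddf_sum.
apply: derE_range_sum => j /=; rewrite coef_map_id0 ?scale0r // polyCM -mulrA.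
rewrite monomE_constM monomE_tnM.
by apply: derE_range_scalEM; apply: derE_range_monomE_Xn.
Qed.

Lemma laurent_EA_der_surj : EA_der_surj t d.
Proof.
apply/EA_der_surjE => X; rewrite -[X]piEK; elim: (repr X) => [|[k P] x IH].
  exact: derE_range0.
by rewrite piE_cons; apply: derE_rangeD IH; apply: derE_range_monomE.
Qed.

End Laurent.

End DerivationE.

Theorem mainTheorem12 (K : closedFieldType) (hK : [pchar K] =i pred0) :
  (forall (S : K -> Prop), reps_KmodZ S ->
     forall (A : comAlgType K) (t : A) (d : A -> A),
       diff_setup t d -> no_exp_log S d -> EA_der_surj t d -> rs_ext_closed t d)
  /\
  (forall (A : comAlgType K) (t : A) (d : A -> A),
       diff_setup t d -> is_laurent t -> rs_ext_closed t d).
Proof.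
split=> [S _ A t d [_ [dD dM] dt dK] _ | A t d [_ [dD dM] dt dK] laurent].
  exact: regular_singular_extension dD dM dt dK.
apply: (regular_singular_extension dD dM dt dK).
exact: laurent_EA_der_surj dD dM dt dK hK laurent.
Qed.
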